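(* Let $G$ be an almost hypohamiltonian graph with exceptional vertex $w$, and let $M$ be a $3$-edge-cut in $G$ (a set of three edges whose removal disconnects $G$). Then $G - M$ has exactly two components $A_1$ and $A_2$, with $A_1 \cong K_1$ and $A_2 \not\cong K_1$. In particular, almost hypohamiltonian graphs are cyclically $4$-edge-connected.
   Context: All graphs are finite, undirected, connected, without loops or multiple edges. A graph is hamiltonian if it has a cycle through all its vertices. A non-hamiltonian graph $G$ is almost hypohamiltonian if there exists a vertex $w$ (the exceptional vertex) such that $G - w$ is non-hamiltonian and $G - v$ is hamiltonian for every vertex $v \neq w$. A graph is cyclically $4$-edge-connected if no edge set of size less than $4$ separates it into two components each containing a cycle. *)

From mathcomp Require Import all_boot.
Set Implicit Arguments. Unset Strict Implicit. Unset Printing Implicit Defensive.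

Section Graphs.
Variable T : finType.

Definition simple_graph (e : rel T) : Prop := symmetric e /\ irreflexive e.
Definition connected_graph (e : rel T) : Prop := forall x y : T, connect e x y.

(* the subgraph induced by S is hamiltonian: a cycle through all vertices of S
   (a cycle has at least 3 vertices) *)
Definition ham_on (e : rel T) (S : {set T}) : Prop :=
  exists s : seq T, [/\ uniq s, forall x, (x \in s) = (x \in S),
                        3 <= size s & cycle e s].

Definition hamiltonian (e : rel T) : Prop := ham_on e [set: T].

Definition ham_minus (e : rel T) (v : T) : Prop := ham_on e [set~ v].

Definition almost_hypohamiltonian (e : rel T) (w : T) : Prop :=
  [/\ ~ hamiltonian e, ~ ham_minus e w & forall v, v != w -> ham_minus e v].

Definition is_edge (e : rel T) (f : {set T}) : Prop :=
  exists x y, e x y /\ f = [set x; y].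

Definition remove_edges (e : rel T) (F : {set {set T}}) : rel T :=
  fun x y => e x y && ([set x; y] \notin F).

Definition edge_set (e : rel T) (F : {set {set T}}) : Prop :=
  forall f, f \in F -> is_edge e f.

Definition edge_cut (e : rel T) (F : {set {set T}}) (k : nat) : Prop :=
  [/\ edge_set e F, #|F| = k & exists x y, ~~ connect (remove_edges e F) x y].

Definition components (e : rel T) : {set {set T}} :=
  [set [set y | connect e x y] | x : T].

Definition has_cycle_in (e : rel T) (C : {set T}) : Prop :=
  exists s : seq T, [/\ uniq s, 3 <= size s, {subset s <= C} & cycle e s].

Definition cyclically_4_edge_connected (e : rel T) : Prop :=
  ~ exists F : {set {set T}}, [/\ edge_set e F, #|F| < 4 &
      exists C1 C2, [/\ C1 \in components (remove_edges e F),
                        C2 \in components (remove_edges e F), C1 != C2,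
                        has_cycle_in (remove_edges e F) C1 &
                        has_cycle_in (remove_edges e F) C2]].

End Graphs.

From mathcomp Require Import all_boot zify.
Set Implicit Arguments. Unset Strict Implicit. Unset Printing Implicit Defensive.

(* Call the edges leaving a vertex set A its boundary, and suppose the boundary
   of A has at most three edges, one of them ab with a in A, b outside A, and
   neither a nor b exceptional.  A hamiltonian cycle of G - a crosses the
   boundary an even, nonzero number of times and never through a, so it uses
   exactly the two other boundary edges, and its arc outside A is a hamiltonian
   path of the complement of A joining their outer ends.  The cycle of G - b
   likewise gives a hamiltonian path of A joining their inner ends, and the two
   paths close up into a hamiltonian cycle of G, which is impossible.  Hence a
   cut with two vertices on each side has at least four edges, and (using the
   cycles of G - v through a single vertex) every cut has at least three. *)

Section CyclicSequences.
Variable T : finType.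
Implicit Types (s p q t : seq T) (A : {set T}).

Lemma path_all_closed (P : pred T) (r : rel T) z q :
  (forall a b, b \in q -> r a b -> P a -> P b) -> P z -> path r z q -> all P q.
Proof.
elim: q z => //= c q IH z H Pz /andP[rzc pq].
have Pc := H z c (mem_head c q) rzc Pz.
by rewrite Pc (IH c) // => a b bq; apply: H; rewrite inE bq orbT.
Qed.

Lemma cycle_exit s A : uniq s -> (exists2 a, a \in s & a \in A) ->
  (exists2 b, b \in s & b \notin A) ->
  exists x, [/\ x \in s, x \in A & next s x \notin A].
Proof.
move=> Us [a as_ aA] [b bs bA].
case: (boolP [exists x, [&& x \in s, x \in A & next s x \notin A]]).
  by case/existsP=> x /and3P[*]; exists x.
rewrite negb_exists => /forallP noexit.
have closedA : cycle (fun u v => (u \in A) ==> (v \in A)) s.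
  apply: cycle_from_next => // x xs; apply/implyP=> xA.
  by have := noexit x; rewrite xs xA /= negbK.
case: (rot_to as_) => i t Ert.
move: closedA; rewrite -(rot_cycle i) Ert /= => closedA.
have /allP inA := path_all_closed (fun u v _ => @implyP _ _) aA closedA.
have : b \in a :: t by rewrite -Ert mem_rot.
rewrite inE => /orP[/eqP ba|bt]; first by move: bA; rewrite ba aA.
by move: bA; rewrite [b \in A](inA b) // mem_rcons inE bt orbT.
Qed.

Lemma next_next_neq s x : uniq s -> 2 < size s -> x \in s -> next s (next s x) != x.
Proof.
move=> Us Hs xs; case: (rot_to xs) => i t Ert.
rewrite -!(next_rot i Us) Ert.
have : uniq (x :: t) by rewrite -Ert rot_uniq.
have : 2 < size (x :: t) by rewrite -Ert size_rot.
case: t {Ert} => [|c1 [|c2 t]] //= _ U.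
have xc1 : x != c1 by apply: contraTneq U => ->; rewrite /= !inE eqxx.
have xc2 : x != c2 by apply: contraTneq U => ->; rewrite /= !inE eqxx orbT.
by rewrite /next /= eqxx (eq_sym c1 x) (negbTE xc1) eqxx eq_sym xc2.
Qed.

Lemma next_edge_inj s x y : uniq s -> 2 < size s -> x \in s -> y \in s ->
  [set x; next s x] = [set y; next s y] -> x = y.
Proof.
move=> Us Hs xs ys E.
have : x \in [set y; next s y] by rewrite -E set21.
have : y \in [set x; next s x] by rewrite E set21.
rewrite !inE => /orP[/eqP -> //|/eqP yn] /orP[/eqP -> //|/eqP xn].
by have := next_next_neq Us Hs xs; rewrite -yn -xn eqxx.
Qed.

Lemma split_at_first A t : exists p q, [/\ t = p ++ q, all [predC A] p &
  (if q is c :: _ then c \in A else true)].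
Proof.
elim: t => [|c t [p [q [-> Hp Hq]]]]; first by exists [::], [::].
case: (boolP (c \in A)) => cA; first by exists [::], (c :: p ++ q).
by exists (c :: p), q; rewrite /= cA Hp.
Qed.

Lemma set2_cross_inj A a b c d : a \in A -> b \notin A -> c \in A -> d \notin A ->
  [set a; b] = [set c; d] -> a = c /\ b = d.
Proof.
move=> aA bA cA dA E.
have : a \in [set c; d] by rewrite -E set21.
have : b \in [set c; d] by rewrite -E set22.
rewrite !inE => /orP[/eqP bc|/eqP bd]; first by move: bA; rewrite bc cA.
by case/orP=> /eqP ac //; move: aA; rewrite ac (negbTE dA).
Qed.

Lemma set3_other (U : finType) (f g h k : U) :
  k \in [set f; g; h] -> k != f -> k = g \/ k = h.
Proof. by rewrite !inE => /orP[/orP[->|/eqP]|/eqP]; [|left|right]. Qed.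

Lemma pick_other A u : 1 < #|A| -> exists2 z, z \in A & z != u.
Proof.
case/card_gt1P => x [y [xA yA xy]].
case: (eqVneq x u) => [xu|xu]; last by exists x.
by exists y => //; rewrite -xu eq_sym.
Qed.

(* A rotation of a cycle that starts just after its unique exit from A and is
   entered into A only from y: its vertices outside A form an initial arc. *)
Lemma arc_outside_head (e : rel T) A X y t :
  uniq (X :: t) -> cycle e (X :: t) -> X \notin A -> has (mem A) t ->
  cycle (fun a b => (a \in A) && (b \notin A) ==> (b == X)) (X :: t) ->
  cycle (fun a b => (a \notin A) && (b \in A) ==> (a == y)) (X :: t) ->
  exists p, [/\ path e X p, last X p = y, uniq (X :: p) &
     forall z, (z \in X :: p) = (z \in X :: t) && (z \notin A)].
Proof.
move=> Ut ce XA hasA exitX entry_y.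
have [p [q [Et Hp Hq]]] := split_at_first A t.
case: q Et Hq => [|c q] Et cA.
  by move/hasP: hasA => [z]; rewrite Et cats0 => /(allP Hp) /= /negbTE ->.
rewrite Et in Ut; move: ce exitX entry_y.
rewrite /= Et rcons_cat rcons_cons !cat_path /=.
move=> /andP[pe _] /andP[_ /andP[_ exitX]] /andP[_ /andP[entry _]].
have outXp : all [predC A] (X :: p) by rewrite /= XA.
have lastA : last X p \notin A by apply: (allP outXp); rewrite mem_last.
have Xcq : X \notin c :: q.
  move: Ut; rewrite -cat_cons cat_uniq => /and3P[_ /hasPn H _].
  by apply/negP => /H; rewrite inE eqxx.
have inAcq : all (mem A) (c :: q).
  move: exitX; rewrite rcons_path => /andP[exitX _].
  rewrite /= cA; apply: (@path_all_closed (fun z => z \in A) _ c q _ cA exitX).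
  move=> u v vq /implyP uv uA; apply: contraNT Xcq => vA.
  by rewrite inE -(eqP (uv _)) ?vq ?orbT // uA vA.
exists p; split => //.
- by move: entry; rewrite lastA cA => /eqP.
- by move: Ut; rewrite -cat_cons cat_uniq => /and3P[].
move=> z; rewrite -cat_cons mem_cat.
case: (boolP (z \in X :: p)) => zp /=; first by have /= -> := allP outXp z zp.
by case: (boolP (z \in c :: q)) => //= /(allP inAcq) /= ->.
Qed.

Lemma cycle_arc_outside (e : rel T) s A x y :
  uniq s -> cycle e s -> x \in s -> x \in A -> next s x \notin A -> y \notin A ->
  (forall z, z \in s -> (z \in A) != (next s z \in A) -> z = x \/ z = y) ->
  exists p, [/\ path e (next s x) p, last (next s x) p = y,
     uniq (next s x :: p) & forall z, (z \in next s x :: p) = (z \in s) && (z \notin A)].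
Proof.
move=> Us cs xs xA XA yA crossings; set X := next s x in XA *.
have Xs : X \in s by rewrite mem_next.
have [i t Ert] := rot_to Xs.
have Ut : uniq (X :: t) by rewrite -Ert rot_uniq.
have memt z : (z \in X :: t) = (z \in s) by rewrite -Ert mem_rot.
have nextt z : next (X :: t) z = next s z by rewrite -Ert next_rot.
have hasA : has (mem A) t.
  apply/hasP; exists x => //; move: xs; rewrite -memt inE.
  by case/orP=> // /eqP xX; move: XA; rewrite -xX xA.
have [|||p [pe lp Up memp]] := @arc_outside_head e A X y t Ut _ XA hasA _ _.
- by rewrite -Ert rot_cycle.
- apply: cycle_from_next => // z; rewrite memt nextt => zs.
  apply/implyP=> /andP[zA nzA].
  case: (crossings z zs) => [|->|zy]; [by rewrite zA nzA | exact: eqxx |].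
  by move: yA; rewrite -zy zA.
- apply: cycle_from_next => // z; rewrite memt nextt => zs.
  apply/implyP=> /andP[zA nzA].
  case: (crossings z zs) => [|zx|->]; [by rewrite (negbTE zA) nzA | | exact: eqxx].
  by move: zA; rewrite zx xA.
by exists p; split => // z; rewrite memp memt.
Qed.

End CyclicSequences.

Section Cuts.
Variables (T : finType) (e : rel T).
Hypothesis esym : symmetric e.
Implicit Types (A S : {set T}) (F : {set {set T}}).

Definition boundary A : {set {set T}} :=
  [set f | [exists x in A, exists y in ~: A, e x y && (f == [set x; y])]].

Lemma boundaryP A f :
  reflect (exists x y, [/\ x \in A, y \notin A, e x y & f = [set x; y]])
          (f \in boundary A).
Proof.
rewrite inE; apply: (iffP existsP).
  move=> [x /andP[xA /existsP[y /andP[yA /andP[exy /eqP ->]]]]].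
  by exists x, y; rewrite inE in yA.
move=> [x [y [xA yA exy ->]]]; exists x; rewrite xA; apply/existsP; exists y.
by rewrite inE yA exy eqxx.
Qed.

Lemma boundary_edge A x y : x \in A -> y \notin A -> e x y -> [set x; y] \in boundary A.
Proof. by move=> xA yA exy; apply/boundaryP; exists x, y. Qed.

Lemma boundaryC A : boundary (~: A) = boundary A.
Proof.
apply/setP => f; apply/boundaryP/boundaryP => -[x [y [xA yA exy ->]]];
  exists y, x; rewrite setUC esym; split => //; move: xA yA; rewrite !inE ?negbK //.
Qed.

Lemma boundary_endpoint A u v : [set u; v] \in boundary A -> u \notin A -> v \in A.
Proof.
case/boundaryP => x [y [xA _ _ E]] uA.
have : x \in [set u; v] by rewrite E set21.
by rewrite !inE => /orP[/eqP xu|/eqP <- //]; move: uA; rewrite -xu xA.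
Qed.

Lemma cycle_boundary_edge A s z : cycle e s -> z \in s ->
  (z \in A) != (next s z \in A) -> [set z; next s z] \in boundary A.
Proof.
move=> cs zs; have ez := next_cycle cs zs.
case zA: (z \in A); case nzA: (next s z \in A) => //= _.
  by apply: boundary_edge; rewrite ?zA ?nzA.
by rewrite setUC; apply: boundary_edge; rewrite ?zA ?nzA // esym.
Qed.

Lemma crossing_edge A a b : connected_graph e -> a \in A -> b \notin A ->
  exists x y, [/\ x \in A, y \notin A & e x y].
Proof.
move=> econn aA bA; case: (connectP (econn a b)) => p pe bl.
case: (boolP [exists x in A, exists y in ~: A, e x y]).
  move=> /existsP[x /andP[xA /existsP[y /andP[yA exy]]]].
  by exists x, y; rewrite inE in yA.
move=> nocross; have /allP inA : all (fun z => z \in A) p.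
  apply: (path_all_closed _ aA pe) => u v _ euv uA; apply: contraNT nocross => vA.
  apply/existsP; exists u; apply/andP; split => //.
  by apply/existsP; exists v; rewrite inE vA euv.
move: bA; rewrite bl.
by have := mem_last a p; rewrite inE => /orP[/eqP ->|/inA /= ->]; rewrite ?aA.
Qed.

Definition spanning_path S u v := exists p,
  [/\ path e u p, last u p = v, uniq (u :: p) & forall z, (z \in u :: p) = (z \in S)].

Lemma spanning_path_sym S u v : spanning_path S u v -> spanning_path S v u.
Proof.
move=> [p [pe lp Up memp]].
have Erev : rev (u :: p) = v :: rev (belast u p) by rewrite lastI rev_rcons lp.
exists (rev (belast u p)); split.
- by move: pe; rewrite -rev_path lp; apply: sub_path => x y /=; rewrite esym.
- by have := congr1 (last v) Erev; rewrite rev_cons last_rcons /= => <-.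
- by rewrite -Erev rev_uniq.
- by move=> z; rewrite -Erev mem_rev.
Qed.

Lemma spanning_path_loop S u z : spanning_path S u u -> z \in S -> z = u.
Proof.
move=> [p [_ lp Up memp]]; rewrite -memp.
case/lastP: p lp Up {memp} => [_ _|p c]; first by rewrite inE => /eqP.
by rewrite last_rcons => -> /= /andP[]; rewrite mem_rcons inE eqxx.
Qed.

Lemma hamiltonian_of_spanning_paths A X y Y x :
  spanning_path (~: A) X y -> spanning_path A Y x -> e y Y -> e x X ->
  1 < #|A| -> hamiltonian e.
Proof.
move=> [p [pe lp Up memp]] [q [qe lq Uq memq]] eyY exX cA.
exists ((X :: p) ++ (Y :: q)); split.
- rewrite cat_uniq Up Uq andbT; apply/hasPn => z.
  by rewrite memq memp inE => ->.
- by move=> z; rewrite mem_cat memp memq !inE; case: (z \in A).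
- have : #|A| <= size (Y :: q).
    rewrite -(card_uniqP Uq); apply: subset_leq_card; apply/subsetP => z.
    by rewrite memq.
  by rewrite size_cat /=; lia.
- by rewrite cat_cons /= rcons_cat cat_path lp /= eyY rcons_path qe lq exX pe.
Qed.

Definition component F x := [set y | connect (remove_edges e F) x y].

Lemma mem_component F x : x \in component F x.
Proof. by rewrite inE connect0. Qed.

Lemma remove_edges_sym F : symmetric (remove_edges e F).
Proof. by move=> u v; rewrite /remove_edges esym setUC. Qed.

Lemma component_sym F x y : (y \in component F x) = (x \in component F y).
Proof. by rewrite !inE (sym_connect_sym (remove_edges_sym F)). Qed.

Lemma component_eq F x z : z \in component F x -> component F z = component F x.
Proof.
rewrite inE => xz; apply/setP => y; rewrite !inE.
by rewrite (same_connect (sym_connect_sym (remove_edges_sym F)) xz).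
Qed.

Lemma component_joint F x y u :
  u \in component F x -> u \in component F y -> component F x = component F y.
Proof. by move=> /component_eq <- /component_eq <-. Qed.

Lemma boundary_component_sub F x : boundary (component F x) \subset F.
Proof.
apply/subsetP => f /boundaryP [u [v [uC vC euv ->]]]; apply: contraNT vC => fF.
rewrite /component !inE in uC *; apply: connect_trans uC (connect1 _).
by rewrite /remove_edges euv fF.
Qed.

End Cuts.

Section AlmostHypohamiltonian.
Variables (T : finType) (e : rel T) (w : T).
Hypotheses (esym : symmetric e) (econn : connected_graph e)
  (ham_minus_v : forall v, v != w -> ham_minus e v) (nonham : ~ hamiltonian e).
Implicit Types (A : {set T}) (F : {set {set T}}).

Lemma three_lt_card v : v != w -> 3 < #|T|.
Proof.
move=> vw; case: (ham_minus_v vw) => s [Us ms Hs _].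
have U : uniq (v :: s) by rewrite /= Us ms !inE eqxx.
by apply: leq_trans (max_card (mem (v :: s))); rewrite (card_uniqP U).
Qed.

Lemma ham_minus_crossings v A : v != w ->
  (exists2 a, a \in A & a != v) -> (exists2 b, b \notin A & b != v) ->
  exists s x y, [/\ uniq s, forall z, (z \in s) = (z != v), 2 < size s & cycle e s] /\
    [/\ x \in s, x \in A, next s x \notin A, y \in s & (y \notin A) && (next s y \in A)].
Proof.
move=> vw [a aA av] [b bA bv]; case: (ham_minus_v vw) => s [Us ms Hs cs].
have ms' z : (z \in s) = (z != v) by rewrite ms !inE.
have as_ : a \in s by rewrite ms'.
have bs : b \in s by rewrite ms'.
have [x [xs xA nxA]] := cycle_exit Us (ex_intro2 _ _ a as_ aA) (ex_intro2 _ _ b bs bA).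
have bC : b \in ~: A by rewrite inE.
have aC : a \notin ~: A by rewrite inE negbK.
have [y [ys yA nyA]] :=
  cycle_exit Us (ex_intro2 _ _ b bs bC) (ex_intro2 _ _ a as_ aC).
exists s, x, y; split; split => //.
by move: yA nyA; rewrite !inE negbK => -> ->.
Qed.

Lemma ham_minus_boundary_edges v A : v != w ->
  (exists2 a, a \in A & a != v) -> (exists2 b, b \notin A & b != v) ->
  exists f1 f2, [/\ f1 \in boundary e A, f2 \in boundary e A, f1 != f2,
                     v \notin f1 & v \notin f2].
Proof.
move=> vw Ha Hb.
have [s [x [y [[Us ms Hs cs] [xs xA nxA ys /andP[yA nyA]]]]]] :=
  ham_minus_crossings vw Ha Hb.
have v_notin z : z \in s -> v \notin [set z; next s z].
  by move=> zs; rewrite !inE negb_or !(eq_sym v) -!ms mem_next zs.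
exists [set x; next s x], [set y; next s y]; split; rewrite ?v_notin //.
- by apply: cycle_boundary_edge; rewrite ?xA ?nxA.
- by apply: cycle_boundary_edge; rewrite ?(negbTE yA) ?nyA.
- apply/negP => /eqP /(next_edge_inj Us Hs xs ys) xy; by move: yA; rewrite -xy xA.
Qed.

(* The hamiltonian cycle of G - a uses exactly the two edges xX and yY of the
   boundary other than ab, and its arc outside A runs from X to y. *)
Lemma small_boundary_spanning_path A a b : a \in A -> b \notin A -> e a b ->
  a != w -> 1 < #|A| -> #|boundary e A| <= 3 ->
  exists x X y Y,
   [/\ x \in A, X \notin A, y \notin A, Y \in A & e x X] /\
   [/\ e y Y, boundary e A = [set [set a; b]; [set x; X]; [set y; Y]],
       a \notin [set x; X], a \notin [set y; Y] & [set x; X] != [set y; Y]] /\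
   spanning_path e (~: A) X y.
Proof.
move=> aA bA eab aw cA small.
have [a' a'A a'a] := pick_other a cA.
have ba : b != a by apply: contraNneq bA => ->.
have [s [x [y [[Us ms Hs cs] [xs xA nxA ys /andP[yA nyA]]]]]] :=
  ham_minus_crossings aw (ex_intro2 _ _ a' a'A a'a) (ex_intro2 _ _ b bA ba).
have a_notin z : z \in s -> a \notin [set z; next s z].
  by move=> zs; rewrite !inE negb_or !(eq_sym a) -!ms mem_next zs.
set X := next s x in nxA a_notin *; set Y := next s y in nyA a_notin *.
have xXb : [set x; X] \in boundary e A by apply: cycle_boundary_edge; rewrite ?xA ?nxA.
have yYb : [set y; Y] \in boundary e A.
  by apply: cycle_boundary_edge; rewrite ?(negbTE yA) ?nyA.
have xXyY : [set x; X] != [set y; Y].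
  by apply/negP => /eqP /(next_edge_inj Us Hs xs ys) xy; move: yA; rewrite -xy xA.
have abxX : [set a; b] != [set x; X].
  by apply: contraNneq (a_notin x xs) => <-; rewrite set21.
have abyY : [set a; b] != [set y; Y].
  by apply: contraNneq (a_notin y ys) => <-; rewrite set21.
have bdA : boundary e A = [set [set a; b]; [set x; X]; [set y; Y]].
  apply/eqP; rewrite eq_sym eqEcard; apply/andP; split.
    apply/subsetP => f; rewrite !in_setU !in_set1 => /orP[/orP[]|] /eqP -> //.
    exact: boundary_edge.
  by apply: leq_trans small _; rewrite -setUA cardsU1 cards2 xXyY !inE negb_or abxX abyY.
have crossings z : z \in s -> (z \in A) != (next s z \in A) -> z = x \/ z = y.
  move=> zs zcross; have := cycle_boundary_edge esym cs zs zcross.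
  rewrite bdA !inE => /orP[/orP[]|] /eqP E.
  - by move: (a_notin z zs); rewrite E set21.
  - by left; apply: next_edge_inj Us Hs zs xs E.
  - by right; apply: next_edge_inj Us Hs zs ys E.
have [p [pe lp Up memp]] := cycle_arc_outside Us cs xs xA nxA yA crossings.
exists x, X, y, Y; split; last split.
- by split => //; apply: next_cycle.
- by split; rewrite ?a_notin //; apply: next_cycle.
exists p; split => // z; rewrite memp ms !inE.
by case: (eqVneq z a) => [->|]; rewrite ?aA ?andbT.
Qed.

Lemma small_boundary_absurd A a b : a \in A -> b \notin A -> e a b ->
  a != w -> b != w -> 1 < #|A| -> 1 < #|~: A| -> #|boundary e A| <= 3 -> False.
Proof.
move=> aA bA eab aw bw cA cC small.
have [x [X [y [Y [[xA XA yA YA exX] [[eyY bdA axX ayY xXyY] outside]]]]]] :=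
  small_boundary_spanning_path aA bA eab aw cA small.
have bC : b \in ~: A by rewrite inE.
have aC : a \notin ~: A by rewrite inE negbK.
have eba : e b a by rewrite esym.
have smallC : #|boundary e (~: A)| <= 3 by rewrite boundaryC.
have [x' [X' [y' [Y' [[xA' XA' yA' YA' _] [[_ bdC bxX byY _] inside]]]]]] :=
  small_boundary_spanning_path bC aC eba bw cC smallC.
rewrite (boundaryC esym) bdA in bdC; rewrite setCK in inside.
rewrite !inE ?negbK in xA' XA' yA' YA'.
suff insideA : spanning_path e A Y x.
  exact: nonham (hamiltonian_of_spanning_paths outside insideA eyY exX cA).
have xX_cases : [set x; X] = [set x'; X'] \/ [set x; X] = [set y'; Y'].
  apply: (@set3_other _ [set b; a]).
    by rewrite -bdC !in_setU !in_set1 eqxx orbT.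
  by apply: contraNneq axX => ->; rewrite !inE eqxx orbT.
have yY_cases : [set y; Y] = [set x'; X'] \/ [set y; Y] = [set y'; Y'].
  apply: (@set3_other _ [set b; a]).
    by rewrite -bdC !in_setU !in_set1 eqxx !orbT.
  by apply: contraNneq ayY => ->; rewrite !inE eqxx orbT.
case: xX_cases yY_cases => E1 [] E2.
- by move: xXyY; rewrite E1 E2 eqxx.
- rewrite [RHS]setUC in E1; rewrite [LHS]setUC in E2.
  have [-> _] := set2_cross_inj xA XA XA' xA' E1.
  have [-> _] := set2_cross_inj YA yA yA' YA' E2.
  exact: spanning_path_sym.
- rewrite [LHS]setUC [RHS]setUC in E2.
  have [-> _] := set2_cross_inj xA XA yA' YA' E1.
  by have [-> _] := set2_cross_inj YA yA XA' xA' E2.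
- by move: xXyY; rewrite E1 E2 eqxx.
Qed.

Lemma boundary_ge4 A : 1 < #|A| -> 1 < #|~: A| -> 3 < #|boundary e A|.
Proof.
wlog wA : A / w \notin A.
  move=> ge4 cA cC; case: (boolP (w \in A)) => wA; last exact: ge4.
  by rewrite -(boundaryC esym); apply: ge4; rewrite ?setCK // inE negbK.
move=> cA cC; rewrite ltnNge; apply/negP => small.
have [a0 a0A _] := pick_other w cA.
have [b0 b0C _] := pick_other w cC; rewrite inE in b0C.
have [a [b [aA bA eab]]] := crossing_edge econn a0A b0C.
have aw : a != w by apply: contraNneq wA => <-.
have [x [X [y [Y [[xA XA yA YA exX] [[eyY _ _ _ _] outside]]]]]] :=
  small_boundary_spanning_path aA bA eab aw cA small.
(* Since ~: A has two vertices, the arc from X to y has two distinct ends, and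
   one of them is not w. *)
have Xy : X != y.
  apply/eqP => Xy; rewrite -Xy in outside.
  have [b' b'C] := pick_other X cC.
  by rewrite (spanning_path_loop outside b'C) eqxx.
case: (eqVneq X w) => [Xw|Xw].
  apply: (@small_boundary_absurd A Y y) => //; first by rewrite esym.
  - by apply: contraNneq wA => <-.
  - by rewrite -Xw eq_sym.
by apply: (@small_boundary_absurd A x X) => //; apply: contraNneq wA => <-.
Qed.

Lemma boundary_ge3_of_edge A a y : a \in A -> y \notin A -> e a y -> y != w ->
  1 < #|~: A| -> 2 < #|boundary e A|.
Proof.
move=> aA yA eay yw cC.
have [b bC by_] := pick_other y cC; rewrite inE in bC.
have ay : a != y by apply: contraNneq yA => <-.
have [g1 [g2 [g1b g2b g12 yg1 yg2]]] :=
  ham_minus_boundary_edges yw (ex_intro2 _ _ a aA ay) (ex_intro2 _ _ b bC by_).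
have ayb : [set a; y] \in boundary e A by apply: boundary_edge.
have sub : [set [set a; y]; g1; g2] \subset boundary e A.
  by apply/subsetP => f; rewrite !in_setU !in_set1 => /orP[/orP[]|] /eqP ->.
apply: leq_trans (subset_leq_card sub).
have ayg1 : [set a; y] != g1 by apply: contraNneq yg1 => <-; rewrite set22.
have ayg2 : [set a; y] != g2 by apply: contraNneq yg2 => <-; rewrite set22.
by rewrite -setUA cardsU1 cards2 g12 !inE negb_or ayg1 ayg2.
Qed.

Lemma boundary_singleton_ge3 A a b : a \in A -> b \notin A -> #|A| <= 1 ->
  2 < #|boundary e A|.
Proof.
move=> aA bA cA.
have EA : A = [set a] by apply/eqP; rewrite eq_sym eqEcard sub1set aA cards1.
have big : 3 < #|T|.
  case: (eqVneq a w) => [aw|]; last exact: three_lt_card.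
  by apply: (@three_lt_card b); apply: contraNneq bA => ->; rewrite -aw.
have cC : 1 < #|~: A| by rewrite EA cardsC1; lia.
have [v vC vw] := pick_other w cC; rewrite inE in vC.
have [b' b'C b'v] := pick_other v cC; rewrite inE in b'C.
have av : a != v by apply: contraNneq vC => <-.
have [f1 [f2 [f1b f2b f12 _ _]]] :=
  ham_minus_boundary_edges vw (ex_intro2 _ _ a aA av) (ex_intro2 _ _ b' b'C b'v).
have [y [yA eay yw]] : exists y, [/\ y \notin A, e a y & y != w].
  case/boundaryP: f1b => u1 [y1 [u1A y1A ey1 E1]].
  case/boundaryP: f2b => u2 [y2 [u2A y2A ey2 E2]].
  rewrite EA !inE in u1A u2A; rewrite (eqP u1A) in E1 ey1; rewrite (eqP u2A) in E2 ey2.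
  case: (eqVneq y1 w) => [y1w|]; last by exists y1.
  by exists y2; split => //; apply: contraNneq f12 => y2w; rewrite E1 E2 y1w y2w.
exact: boundary_ge3_of_edge aA yA eay yw cC.
Qed.

Lemma boundary_ge3 A a b : a \in A -> b \notin A -> 2 < #|boundary e A|.
Proof.
move=> aA bA; case: (leqP #|A| 1) => cA; first exact: boundary_singleton_ge3 aA bA cA.
case: (leqP #|~: A| 1) => cC; last exact/ltnW/boundary_ge4.
rewrite -(boundaryC esym); apply: (@boundary_singleton_ge3 _ b a) => //.
  by rewrite inE.
by rewrite inE negbK.
Qed.

Lemma component_boundary_eq F x y : #|F| <= 3 -> y \notin component e F x ->
  boundary e (component e F x) = F.
Proof.
move=> cF yC; apply/eqP; rewrite eqEcard boundary_component_sub /=.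
exact: leq_trans cF (boundary_ge3 (mem_component _ _ _) yC).
Qed.

Lemma three_cut_two_components F x y : #|F| <= 3 -> y \notin component e F x ->
  forall z, (z \in component e F x) || (z \in component e F y).
Proof.
move=> cF yCx z; apply/negPn/negP; rewrite negb_or => /andP[zCx zCy].
set Cx := component e F x in yCx zCx.
have bdx : boundary e Cx = F := component_boundary_eq cF yCx.
have far_end c u v : c \notin Cx -> [set u; v] \in F -> u \in Cx ->
    v \in component e F c.
  move=> cCx uvF uCx; apply: (@boundary_endpoint _ e _ u).
    by rewrite (@component_boundary_eq _ _ x) // -(component_sym esym).
  apply: contra cCx => uCc.
  by rewrite /Cx -(component_joint esym uCc uCx) mem_component.
have /card_gt0P [f fb] : 0 < #|boundary e Cx|.
  exact/ltnW/ltnW/(boundary_ge3 (mem_component _ _ _) yCx).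
have fF : f \in F by rewrite -bdx.
case/boundaryP: fb => u [v [uCx _ _ Ef]]; rewrite Ef in fF.
have vCz := far_end z u v zCx fF uCx.
have vCy := far_end y u v yCx fF uCx.
by move: zCy; rewrite -(component_joint esym vCz vCy) mem_component.
Qed.

Lemma three_edge_cut_components M : edge_cut e M 3 ->
  exists A1 A2 : {set T},
    [/\ components (remove_edges e M) = [set A1; A2], A1 != A2,
        #|A1| = 1 & #|A2| != 1].
Proof.
move=> [_ cM [x [y nxy]]]; have cM3 : #|M| <= 3 by rewrite cM.
set Cx := component e M x; set Cy := component e M y.
have yCx : y \notin Cx by rewrite inE.
have cover z : (z \in Cx) || (z \in Cy) := three_cut_two_components cM3 yCx z.
have CyE : Cy = ~: Cx.
  apply/setP => z; rewrite in_setC; apply/idP/idP => [zCy|zCx]; last first.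
    by have := cover z; rewrite (negbTE zCx).
  apply/negP => zCx.
  by move: yCx; rewrite /Cx (component_joint esym zCx zCy) mem_component.
have comps : components (remove_edges e M) = [set Cx; Cy].
  apply/setP => C; apply/imsetP/set2P => [[z _ ->]|[]->]; [|by exists x|by exists y].
  by case/orP: (cover z) => /(component_eq esym) E; [left|right].
have CxCy : Cx != Cy by apply: contraNneq yCx => ->; exact: mem_component.
have big : 3 < #|T|.
  case: (eqVneq x w) => [xw|]; last exact: three_lt_card.
  by apply: (@three_lt_card y); apply: contraNneq yCx => ->; rewrite -xw mem_component.
have sizes : #|Cx| + #|Cy| = #|T| by rewrite CyE cardsC.
have Cx_pos : 0 < #|Cx| by apply/card_gt0P; exists x; exact: mem_component.
have Cy_pos : 0 < #|Cy| by apply/card_gt0P; exists y; exact: mem_component.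
have not_both_big : ~~ ((1 < #|Cx|) && (1 < #|Cy|)).
  apply/andP => -[cx cy]; move: (boundary_ge4 cx); rewrite -CyE.
  by rewrite (component_boundary_eq cM3 yCx) cM => /(_ cy).
case: (leqP #|Cx| 1) => cx.
  by exists Cx, Cy; split => //; apply/eqP; lia.
case: (leqP #|Cy| 1) => cy; last by rewrite cx cy in not_both_big.
by exists Cy, Cx; rewrite setUC eq_sym; split => //; apply/eqP; lia.
Qed.

Lemma cyclically_4_edge_connected_of_almost_hypohamiltonian :
  cyclically_4_edge_connected e.
Proof.
move=> [F [_ cF [_ [_ [/imsetP[x _ ->] /imsetP[y _ ->] CxCy cycx cycy]]]]].
have cycle_big z : has_cycle_in (remove_edges e F) (component e F z) ->
    1 < #|component e F z|.
  move=> [s [Us sz sub _]]; apply: leq_trans (ltnW sz) _.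
  by rewrite -(card_uniqP Us); apply/subset_leq_card/subsetP.
have sub : component e F y \subset ~: component e F x.
  apply/subsetP => z zCy; rewrite in_setC; apply: contraNN CxCy => zCx.
  exact/eqP/(component_joint esym zCx zCy).
have cCx := leq_trans (cycle_big y cycy) (subset_leq_card sub).
have := boundary_ge4 (cycle_big x cycx) cCx.
have := subset_leq_card (@boundary_component_sub _ e F x); lia.
Qed.

End AlmostHypohamiltonian.

Theorem lemma3p4 (T : finType) (e : rel T) (w : T) :
  simple_graph e -> connected_graph e -> almost_hypohamiltonian e w ->
  (forall M : {set {set T}}, edge_cut e M 3 ->
     exists A1 A2 : {set T},
       [/\ components (remove_edges e M) = [set A1; A2], A1 != A2,
           #|A1| = 1 & #|A2| != 1])
  /\ cyclically_4_edge_connected e.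
Proof.
move=> [esym _] econn [nonham _ ham_minus_v]; split.
  exact: three_edge_cut_components esym econn ham_minus_v nonham.
exact: cyclically_4_edge_connected_of_almost_hypohamiltonian
  esym econn ham_minus_v nonham.
Qed.
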